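(* Let $r\in\mathbb N$, $1<q<\infty$ and $t=r^{1/q}$. Then $K^{\mathcal M}_{q,r}=\mathcal N_t^{(q)}$.
   Context: $c_{00}$ denotes finitely supported real sequences and $(e_n)$ the unit vectors. $K^{\mathcal M}_{q,r}$ is the smallest subset of $c_{00}$ that contains all vectors $\pm e_n$ and has the property: whenever $y_1,\dots,y_l\in K^{\mathcal M}_{q,r}$ with $l\le r$ and pairwise disjoint supports, then $r^{-1/q}(y_1+\dots+y_l)\in K^{\mathcal M}_{q,r}$. For $\alpha>0$ let $C_\alpha=\{\pm\alpha^j: j\in\mathbb Z\}\cup\{0\}$, $\mathcal N_\alpha=\{x\in c_{00}: x(i)\in C_\alpha \text{ for all } i\}$, and $\mathcal N_\alpha^{(q)}=\mathcal N_\alpha\cap B_{\ell_q}$, where $B_{\ell_q}$ is the closed unit ball of $\ell_q$. *)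

From HB Require Import structures.
From mathcomp Require Import all_boot all_order all_algebra.
From mathcomp Require Import all_classical all_reals.
From mathcomp Require Import exp.
Set Implicit Arguments. Unset Strict Implicit. Unset Printing Implicit Defensive.
Import Order.TTheory GRing.Theory Num.Theory.
Local Open Scope ring_scope.

Section Defs.
Variable R : realType.

Definition c00 (x : nat -> R) : Prop :=
  exists N : nat, forall i : nat, (N <= i)%N -> x i = 0.

Definition unitv (n : nat) : nat -> R := fun i => (i == n)%:R.

Definition disjoint_supports (l : nat) (y : 'I_l -> nat -> R) : Prop :=
  forall (a b : 'I_l), a <> b -> forall i : nat, y a i = 0 \/ y b i = 0.

Inductive KM (q : R) (r : nat) : (nat -> R) -> Prop :=
| KM_pos n : KM q r (unitv n)
| KM_neg n : KM q r (fun i => - unitv n i)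
| KM_comb (l : nat) (y : 'I_l -> nat -> R) :
    (l <= r)%N -> (forall k, KM q r (y k)) -> disjoint_supports y ->
    KM q r (fun i => (r%:R) `^ (- q^-1) * \sum_(k < l) y k i).

Definition C_alpha (alpha : R) (v : R) : Prop :=
  v = 0 \/ exists j : int, v = alpha ^ j \/ v = - alpha ^ j.

Definition N_alpha (alpha : R) (x : nat -> R) : Prop :=
  c00 x /\ forall i : nat, C_alpha alpha (x i).

Definition in_ball_lq (q : R) (x : nat -> R) : Prop :=
  exists N : nat, (forall i : nat, (N <= i)%N -> x i = 0) /\
    \sum_(i < N) `|x i| `^ q <= 1.

Definition N_alpha_q (alpha q : R) (x : nat -> R) : Prop :=
  N_alpha alpha x /\ in_ball_lq q x.

End Defs.

From mathcomp Require Import all_boot all_order all_algebra.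
From mathcomp Require Import all_classical all_reals.
From mathcomp Require Import exp.
From mathcomp Require Import zify.
Import Order.TTheory GRing.Theory Num.Theory.
Set Implicit Arguments. Unset Strict Implicit. Unset Printing Implicit Defensive.
Local Open Scope ring_scope.

(** The generating operation maps entries +-t^j to +-t^(j-1)
   and, the supports being disjoint, multiplies the q-th power of the l_q norm
   by 1/r while adding at most r norms; so K^M_{q,r} lies in N_t^(q).
   Conversely, the nonzero entries of x in N_t^(q) are +-t^(-k_i) with
   sum_i r^(-k_i) <= 1 (a Kraft inequality). View +-e_i as a leaf at depth k_i
   and build an r-ary tree bottom up: at the deepest level D+1 group the
   vectors into blocks of at most r and replace each block by its combination,
   which lives at depth D. If s vectors sit at depth D+1 and the shallower ones
   have mass A (in units r^(-D)), then rA + s <= r^(D+1) yields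
   A + ceil(s/r) <= r^D, so the inequality survives; at depth 0 a single
   vector is left, and it is x. *)

Lemma count_filterC (T : Type) (a p : pred T) (s : seq T) :
  count a s = (count a [seq x <- s | p x] + count a [seq x <- s | ~~ p x])%N.
Proof. by elim: s => //= x s ->; case: (p x) => /=; [rewrite addnA|rewrite addnCA]. Qed.

Lemma count_le1_nth (T : Type) (a : pred T) (x0 : T) (s : seq T) (i j : nat) :
  (count a s <= 1)%N -> (i < size s)%N -> (j < size s)%N ->
  a (nth x0 s i) -> a (nth x0 s j) -> i = j.
Proof.
move=> le1; suff lt_contra k l : (k < l < size s)%N ->
    a (nth x0 s k) -> a (nth x0 s l) -> False.
  move=> lt_is lt_js ai aj; case: (ltngtP i j) => // [lt_ij|lt_ji].
    by case: (lt_contra i j); rewrite ?lt_ij.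
  by case: (lt_contra j i); rewrite ?lt_ji.
move=> /andP[lt_kl lt_ls] ak al; move: le1.
have: has a (take l s).
  apply/(has_nthP x0); exists k; rewrite ?nth_take //.
  by rewrite size_take_min leq_min lt_kl (ltn_trans lt_kl).
have: has a (drop l s).
  by apply/(has_nthP x0); exists 0%N; rewrite ?nth_drop ?addn0 // size_drop subn_gt0.
by rewrite -{3}(cat_take_drop l s) count_cat !has_count; lia.
Qed.

Lemma sum_neq0_count (T : Type) (V : nmodType) (s : seq T) (f : T -> V) :
  (((\sum_(x <- s) f x != 0)%R : nat) <= count (fun x => f x != 0)%R s)%N.
Proof.
elim: s => [|x s IH]; first by rewrite big_nil eqxx.
rewrite big_cons /=; have [->|_] := eqVneq (f x) 0; first by rewrite add0r.
by rewrite add1n (leq_trans (leq_b1 _)).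
Qed.

Section SingleSupport.
Variables (I : finType) (V : zmodType) (f : I -> V).
Hypothesis single : forall a b, a <> b -> f a = 0 \/ f b = 0.

Lemma single_supportP :
  (forall k, f k = 0) \/ exists k0, forall k, k != k0 -> f k = 0.
Proof.
have [/existsP[k0 nz]|/existsPn z] := boolP [exists k, f k != 0].
  right; exists k0 => k /eqP ne; case: (single ne) => // f0.
  by rewrite f0 eqxx in nz.
by left => k; apply/eqP; rewrite -[_ == _]negbK z.
Qed.

Lemma sum_single_support (W : nmodType) (G : V -> W) :
  G 0 = 0 -> \sum_k G (f k) = G (\sum_k f k).
Proof.
move=> G0; case: single_supportP => [z|[k0 z]].
  by rewrite !big1 // => k _; rewrite z.
by rewrite (bigD1 k0) // [in RHS](bigD1 k0) //= !big1 ?addr0 // => k /z ->.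
Qed.

End SingleSupport.

Lemma C_alphaN (R : realType) (a v : R) : C_alpha a v -> C_alpha a (- v).
Proof.
case=> [->|[j [->|->]]]; first by left; rewrite oppr0.
  by right; exists j; right.
by right; exists j; left; rewrite opprK.
Qed.

Lemma C_alpha_scale_inv (R : realType) (a v : R) :
  a != 0 -> C_alpha a v -> C_alpha a (a^-1 * v).
Proof.
move=> a_neq0; have inv_exp j : a^-1 * a ^ j = a ^ (j - 1).
  by rewrite expfzDr // exprN1 mulrC.
case=> [->|[j [->|->]]]; first by left; rewrite mulr0.
  by right; exists (j - 1); left; rewrite inv_exp.
by right; exists (j - 1); right; rewrite mulrN inv_exp.
Qed.

Section KMTheory.
Variables (R : realType) (q : R) (r : nat).

Lemma KM_ext (x y : nat -> R) : x =1 y -> KM q r x -> KM q r y.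
Proof. by move=> /boolp.funext ->. Qed.

Lemma KM0 : KM q r (fun _ => 0).
Proof.
by apply: KM_ext (@KM_comb R q r 0 (fun _ _ => 0) (leq0n r) _ _) => [i|[]|[]] //;
  rewrite big_ord0 mulr0.
Qed.

Definition signed_unit (b : bool) (n : nat) : nat -> R :=
  fun i => (-1) ^+ b * unitv R n i.

Lemma KM_signed_unit b n : KM q r (signed_unit b n).
Proof.
by case: b; [apply: KM_ext (KM_neg q r n)|apply: KM_ext (KM_pos q r n)] => i;
  rewrite /signed_unit ?mulN1r ?mul1r.
Qed.

Lemma KM_c00 x : KM q r x -> c00 x.
Proof.
have unit_c00 n : c00 (unitv R n).
  by exists n.+1 => i; rewrite /unitv; case: eqP => // ->; rewrite ltnn.
elim=> [n|n|l y _ _ IH _]; first exact: unit_c00.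
  by have [N vanish] := unit_c00 n; exists N => i /vanish ->; rewrite oppr0.
have [N vanish] := boolp.choice IH.
exists (\max_k N k)%N => i le_i; rewrite big1 ?mulr0 // => k _.
by apply: vanish; apply: leq_trans le_i; exact: leq_bigmax.
Qed.

Definition km_vec := {v : nat -> R | KM q r v}.

Definition nz_at (i : nat) (v : km_vec) : bool := sval v i != 0.

Definition disjoint_seq (s : seq km_vec) := forall i, (count (nz_at i) s <= 1)%N.

Lemma disjoint_seq_cat s1 s2 :
  disjoint_seq (s1 ++ s2) -> disjoint_seq s1 /\ disjoint_seq s2.
Proof.
move=> disj; split=> i; apply: leq_trans (disj i).
  by rewrite count_cat leq_addr.
by rewrite count_cat leq_addl.
Qed.

Lemma KM_comb_seq (s : seq km_vec) : (size s <= r)%N -> disjoint_seq s ->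
  KM q r (fun i => r%:R `^ (- q^-1) * \sum_(v <- s) sval v i).
Proof.
move=> size_s disj; pose v0 : km_vec := exist _ _ KM0.
pose y (k : 'I_(size s)) := sval (nth v0 s k).
apply: KM_ext (@KM_comb R q r (size s) y size_s (fun k => svalP (nth v0 s k)) _).
  by move=> i; rewrite [in RHS](big_nth v0) big_mkord.
move=> a b ne i; rewrite /y.
have [|nz_a] := eqVneq (sval (nth v0 s a) i) 0; first by left.
have [|nz_b] := eqVneq (sval (nth v0 s b) i) 0; first by right.
by case: ne; apply: val_inj; exact: (count_le1_nth (disj i) _ _ nz_a nz_b).
Qed.

Lemma c00_expansion x N m : (forall i, (N <= i)%N -> x i = 0) ->
  \sum_(i <- [seq i <- iota 0 N | x i != 0]) x i * unitv R i m = x m.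
Proof.
move=> vanish; rewrite big_filter big_mkcond /=.
rewrite (eq_bigr (fun i => x i * unitv R i m)) => [|i _]; last first.
  by case: eqP => // ->; rewrite mul0r.
have [lt_mN|le_Nm] := ltnP m N.
  rewrite (bigD1_seq m) ?mem_iota ?iota_uniq //= /unitv eqxx mulr1.
  by rewrite big1 ?addr0 // => i ne; rewrite eq_sym (negbTE ne) mulr0.
rewrite vanish // big1_seq // => i; rewrite mem_iota /unitv => /andP[_ lt_iN].
by case: eqP => [eq_mi|]; [move: lt_iN; rewrite -eq_mi ltnNge le_Nm|rewrite mulr0].
Qed.

Hypothesis r_gt0 : (0 < r)%N.
Hypothesis q_gt0 : 0 < q.

Local Notation t := (r%:R `^ q^-1).

Lemma root_gt0 : 0 < t.
Proof. by rewrite powR_gt0 // ltr0n. Qed.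

Lemma root_neq0 : t != 0.
Proof. by rewrite gt_eqF ?root_gt0. Qed.

Lemma powR_root_exprn k : (t ^+ k) `^ q = r%:R ^+ k.
Proof.
rewrite -[t ^+ k]powR_mulrn ?powR_ge0 // -!powRrM mulrCA mulVf ?gt_eqF //.
by rewrite mulr1 powR_mulrn ?ler0n.
Qed.

Lemma powR_root_invn k : (t ^- k) `^ q = r%:R ^- k.
Proof.
rewrite -powR_inv1 ?exprn_ge0 ?powR_ge0 // -powRrM mulrC powRrM powR_root_exprn.
by rewrite powR_inv1 // exprn_ge0 ?ler0n.
Qed.

Lemma KM_C_alpha x : KM q r x -> forall i, C_alpha t (x i).
Proof.
have unit_C n i : C_alpha t (unitv R n i).
  by rewrite /unitv; case: eqP => _; [right; exists 0; left; rewrite expr0z|left].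
elim=> [n|n|l y _ _ IH disj] i; [exact: unit_C|exact/C_alphaN/unit_C|].
rewrite powRN; apply: C_alpha_scale_inv root_neq0 _.
case: (single_supportP (fun a b ne => disj a b ne i)) => [z|[k0 z]].
  by left; rewrite big1.
by rewrite (bigD1 k0) //= big1 ?addr0 // => k /z.
Qed.

Lemma KM_lq_norm x : KM q r x -> forall N, \sum_(i < N) `|x i| `^ q <= 1.
Proof.
have G0 : `|0 : R| `^ q = 0 by rewrite normr0 powR0 ?gt_eqF.
have unit_le1 n N : \sum_(i < N) `|unitv R n i| `^ q <= 1.
  rewrite (eq_bigr (fun i : 'I_N => unitv R n i)); last first.
    by move=> i _; rewrite /unitv; case: eqP => _; rewrite ?normr1 ?powR1.
  have [lt_nN|le_Nn] := ltnP n N.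
    rewrite (bigD1 (Ordinal lt_nN)) //= /unitv eqxx big1 ?addr0 // => i ne.
    by case: eqP => // eq_in; case/eqP: ne; apply: val_inj.
  rewrite big1 // => i _; rewrite /unitv; case: eqP => // eq_in.
  by move: (ltn_ord i); rewrite eq_in ltnNge le_Nn.
elim=> [n|n|l y le_lr _ IH disj] N; first exact: unit_le1.
  by under eq_bigr do rewrite normrN; exact: unit_le1.
have norm_comb i :
    `|r%:R `^ (- q^-1) * \sum_k y k i| `^ q = r%:R^-1 * \sum_k `|y k i| `^ q.
  rewrite normrM powRM // ger0_norm ?powR_ge0 // -powRrM mulNr mulVf ?gt_eqF //.
  rewrite powR_inv1 ?ler0n //; congr (_ * _); symmetry.
  exact: (sum_single_support (fun a b ne => disj a b ne i) (G := fun v => `|v| `^ q) G0).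
under eq_bigr do rewrite norm_comb.
have r_neq0 : r%:R != 0 :> R by rewrite pnatr_eq0 -lt0n.
rewrite -mulr_sumr exchange_big /= -[X in _ <= X](mulVf r_neq0).
rewrite ler_wpM2l ?invr_ge0 ?ler0n //.
apply: le_trans (ler_sum _ (fun k _ => IH k N)) _.
by rewrite sumr_const card_ord ler_nat.
Qed.

Lemma KM_N_alpha_q x : KM q r x -> N_alpha_q t q x.
Proof.
move=> Kx; have [N vanish] := KM_c00 Kx.
split; first by split; [exists N|exact: KM_C_alpha].
by exists N; split => //; exact: KM_lq_norm.
Qed.

Lemma C_alpha_depth v : C_alpha t v -> v != 0 -> `|v| `^ q <= 1 ->
  exists k : nat, `|v| = t ^- k.
Proof.
case=> [->|[j tj]]; first by rewrite eqxx.
move=> _ le1; have norm_v : `|v| = t ^ j.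
  by case: tj => ->; rewrite ?normrN gtr0_norm // exprz_gt0 // root_gt0.
case: j {tj} norm_v => [[|n]|n] norm_v; last by exists n.+1; rewrite norm_v NegzE exprnN.
  by exists 0%N; rewrite norm_v expr0z expr0 invr1.
(* A positive exponent is possible only when r = 1, i.e. t = 1. *)
have r1 : r = 1%N.
  apply/eqP; rewrite eqn_leq r_gt0 andbT -(ler_nat R); apply: le_trans le1.
  by rewrite norm_v powR_root_exprn -natrX ler_nat expnS leq_pmulr // expn_gt0 r_gt0.
by exists 0%N; rewrite norm_v r1 powR1 exp1rz expr0 invr1.
Qed.

Lemma group_in_blocks (s : seq km_vec) : disjoint_seq s ->
  exists u : seq km_vec,
    [/\ (size u * r < size s + r)%N, (* size u <= ceil (size s / r) *)
        forall i, (count (nz_at i) u <= count (nz_at i) s)%N &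
        forall i, \sum_(w <- u) sval w i = t^-1 * \sum_(v <- s) sval v i].
Proof.
have [n] := ubnP (size s); elim: n s => // n IH s lt_sn disj.
have [/size0nil -> | s_gt0] := posnP (size s).
  by exists [::]; split => [|i|i]; rewrite ?big_nil ?mulr0.
have [disj_take disj_drop] : disjoint_seq (take r s) /\ disjoint_seq (drop r s).
  by apply: disjoint_seq_cat; rewrite cat_take_drop.
have lt_drop : (size (drop r s) < n)%N by rewrite size_drop; lia.
have [u [size_u count_u sum_u]] := IH _ lt_drop disj_drop.
have size_take : (size (take r s) <= r)%N by rewrite size_take_min geq_minl.
pose w : km_vec := exist _ _ (KM_comb_seq size_take disj_take).
exists (w :: u); split.
- rewrite size_drop in size_u; rewrite [size _]/= mulSn.
  have [le_rs|lt_sr] := leqP r (size s); first by rewrite subnK in size_u; lia.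
  move: size_u; have -> : (size s - r = 0)%N by apply/eqP; rewrite subn_eq0 ltnW.
  by rewrite -{2}[r]mul1n ltn_pmul2r // ltnS leqn0 => /eqP ->; lia.
- move=> i; rewrite /= -[s in (_ <= count _ s)%N](cat_take_drop r) count_cat.
  apply: leq_add (count_u i); rewrite /nz_at /= mulf_eq0 negb_or.
  by case: (_ != 0) => //=; exact: sum_neq0_count.
- move=> i; rewrite big_cons sum_u /= -[s in RHS](cat_take_drop r).
  by rewrite big_cat mulrDr powRN.
Qed.

(* A pair (k, v) stands for the vector t^-k v; if all depths are at most D,
   then forest_weight D F = r^D * sum_(k, v) r^-k. *)
Definition forest_sum (F : seq (nat * km_vec)) (i : nat) : R :=
  \sum_(p <- F) t ^- p.1 * sval p.2 i.

Definition forest_weight (D : nat) (F : seq (nat * km_vec)) : nat :=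
  \sum_(p <- F) r ^ (D - p.1).

Lemma forest_weightS D F : all (fun p => p.1 <= D)%N F ->
  forest_weight D.+1 F = (r * forest_weight D F)%N.
Proof.
rewrite /forest_weight big_distrr /=; elim: F => [|p F IH]; first by rewrite !big_nil.
by case/andP=> le_pD /IH; rewrite !big_cons subSn // expnS => ->.
Qed.

Lemma forest_descend D F :
  all (fun p => p.1 <= D.+1)%N F -> disjoint_seq (unzip2 F) ->
  (forest_weight D.+1 F <= r ^ D.+1)%N ->
  exists F', [/\ all (fun p => p.1 <= D)%N F', disjoint_seq (unzip2 F'),
    (forest_weight D F' <= r ^ D)%N & forest_sum F' =1 forest_sum F].
Proof.
move=> depth disj weight.
pose top (p : nat * km_vec) := p.1 == D.+1.
set Ft := [seq p <- F | top p]; set Fb := [seq p <- F | ~~ top p].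
have count_F i : count (nz_at i) (unzip2 F) =
    (count (nz_at i) (unzip2 Ft) + count (nz_at i) (unzip2 Fb))%N.
  by rewrite !count_map -count_filterC.
have disj_Ft : disjoint_seq (unzip2 Ft).
  by move=> i; apply: leq_trans (disj i); rewrite count_F leq_addr.
have [u [size_u count_u sum_u]] := group_in_blocks disj_Ft.
have depth_Fb : all (fun p => p.1 <= D)%N Fb.
  rewrite all_filter; apply: sub_all depth => p.
  by rewrite /top leq_eqVlt ltnS /=; case: (_ == _).
have weight_F : forest_weight D.+1 F = (size (unzip2 Ft) + r * forest_weight D Fb)%N.
  rewrite -forest_weightS // /forest_weight (bigID top) /= big_filter.
  rewrite size_map size_filter -sum1_count; congr (_ + _)%N.
  by apply: eq_bigr => p /eqP ->; rewrite subnn.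
exists ([seq (D, w) | w <- u] ++ Fb).
have unzip2_F' : unzip2 ([seq (D, w) | w <- u] ++ Fb) = u ++ unzip2 Fb.
  by rewrite /unzip2 map_cat -map_comp map_id.
split.
- rewrite all_cat all_map (@eq_all _ _ predT) ?all_predT => [//|w]; exact: leqnn.
- move=> i; rewrite unzip2_F' count_cat; apply: leq_trans (disj i).
  by rewrite count_F leq_add2r.
- rewrite /forest_weight big_cat big_map /= subnn sum1_size -/(forest_weight D Fb).
  (* |u| r < s + r and s + r W <= r r^D give |u| + W <= r^D *)
  rewrite weight_F expnS in weight; nia.
- move=> i; rewrite /forest_sum big_cat big_map /= -mulr_sumr sum_u mulrA -invfM -exprSr.
  rewrite [RHS](bigID top) /= big_filter; congr (_ + _).
  by rewrite big_map big_filter mulr_sumr; apply: eq_bigr => p /eqP ->.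
Qed.

Lemma KM_forest_sum D F :
  all (fun p => p.1 <= D)%N F -> disjoint_seq (unzip2 F) ->
  (forest_weight D F <= r ^ D)%N -> KM q r (forest_sum F).
Proof.
elim: D F => [|D IH] F depth disj weight; last first.
  have [F' [depth' disj' weight' sum_F']] := forest_descend depth disj weight.
  exact: KM_ext sum_F' (IH F' depth' disj' weight').
have : (size F <= 1)%N.
  by move: weight; rewrite /forest_weight (eq_bigr (fun _ => 1%N)) // sum1_size.
case: F depth {disj weight} => [_ _|[k v] [|//]] /=.
  by apply: KM_ext KM0 => i; rewrite /forest_sum big_nil.
rewrite leqn0 andbT => /eqP-> _.
by apply: KM_ext (svalP v) => i; rewrite /forest_sum big_seq1 expr0 invr1 mul1r.
Qed.

Definition sign_forest (x : nat -> R) (k : nat -> nat) (S : seq nat) :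
    seq (nat * km_vec) :=
  [seq (k i, exist _ _ (KM_signed_unit (x i < 0) i) : km_vec) | i <- S].

Lemma sign_forest_disjoint x k S : uniq S -> disjoint_seq (unzip2 (sign_forest x k S)).
Proof.
move=> uniq_S m; rewrite /unzip2 -map_comp count_map.
apply: leq_trans (_ : count (pred1 m) S <= 1)%N; last by rewrite count_uniq_mem ?leq_b1.
apply: sub_count => i /=; rewrite /nz_at /= /signed_unit /unitv mulf_eq0 negb_or.
by case/andP=> _; rewrite pnatr_eq0 eqb0 negbK eq_sym.
Qed.

Lemma N_alpha_q_KM x : N_alpha_q t q x -> KM q r x.
Proof.
move=> [[_ Cx] [N [vanish norm_le1]]].
have lt_N i : x i != 0 -> (i < N)%N.
  by move=> nz; rewrite ltnNge; apply: contra nz => /vanish ->.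
have /boolp.choice[k depth_x] : forall i, exists k : nat, x i != 0 -> `|x i| = t ^- k.
  move=> i; have [xi0|nz] := eqVneq (x i) 0; first by exists 0%N; rewrite xi0 => /negP[].
  have entry_le1 : `|x i| `^ q <= 1.
    apply: le_trans norm_le1; rewrite (bigD1 (Ordinal (lt_N i nz))) //= lerDl.
    by apply: sumr_ge0 => j _; exact: powR_ge0.
  by have [l ->] := C_alpha_depth (Cx i) nz entry_le1; exists l.
pose S := [seq i <- iota 0 N | x i != 0].
pose D := (\max_(i <- S) k i)%N.
apply: KM_ext (@KM_forest_sum D (sign_forest x k S) _ _ _).
- move=> m; rewrite /forest_sum big_map -[RHS](c00_expansion m vanish).
  apply: eq_big_seq => i; rewrite mem_filter => /andP[nz _] /=.
  rewrite /signed_unit mulrA; congr (_ * _).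
  by rewrite [RHS]numEsign (depth_x i nz) mulrC.
- by rewrite all_map; apply/allP => i iS; apply: leq_bigmax_seq.
- by apply: sign_forest_disjoint; rewrite filter_uniq ?iota_uniq.
- rewrite -(ler_nat R) natrX /forest_weight big_map natr_sum /=.
  rewrite (eq_big_seq (fun i => r%:R ^+ D * `|x i| `^ q)) => [|i iS]; last first.
    have le_kD : (k i <= D)%N by apply: leq_bigmax_seq.
    move: iS; rewrite mem_filter => /andP[nz _].
    rewrite (depth_x i nz) powR_root_invn natrX -{2}(subnK le_kD) exprD mulfK //.
    by rewrite expf_neq0 // pnatr_eq0 -lt0n r_gt0.
  rewrite -mulr_sumr -[X in _ <= X]mulr1 ler_wpM2l ?exprn_ge0 ?ler0n //.
  apply: le_trans _ norm_le1.
  rewrite -(big_mkord xpredT (fun i => `|x i| `^ q)) /index_iota subn0.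
  rewrite big_filter big_mkcond /=; apply: ler_sum => i _.
  by case: ifP => // _; exact: powR_ge0.
Qed.

End KMTheory.

Theorem mainTheorem2 (R : realType) (r : nat) (q : R) :
  (0 < r)%N -> 1 < q ->
  forall x : nat -> R,
    KM q r x <-> N_alpha_q ((r%:R) `^ (q^-1)) q x.
Proof.
move=> r_gt0 q_gt1 x; have q_gt0 : 0 < q := lt_trans ltr01 q_gt1.
by split; [exact: KM_N_alpha_q | exact: N_alpha_q_KM].
Qed.
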